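(* The ODMTS design found by Algorithm arc-S1 with expansion rule (d) satisfies the correct adoption property: writing the design as $\mathbf{z} = \mbox{ODMTS-DFD}(\hat{T})$ for the trip set $\hat{T}$ used to obtain it, every rider $r \in \hat{T}$ adopts the ODMTS option in $\mathbf{z}$.
   Context: Setting (On-Demand Multimodal Transit System design with adoption awareness). There is a set $T$ of trips (riders) and a set $H$ of hubs; a network design is a vector $\mathbf{z} \in \{0,1\}^{|H|\times|H|}$ of opened bus arcs $z_{hl}$ satisfying flow balance $\sum_{l} z_{hl} = \sum_l z_{lh}$ for all $h \in H$. The trips split into core trips $T \setminus T'$ (existing riders, always served, always in the considered trip set) and latent trips $T'$; a latent trip $r$ adopts the ODMTS under a design iff its ODMTS travel time is at most $\alpha^r t^r_{cur}$ (its current travel time scaled by $\alpha^r$). ODMTS-DFD$(\hat{T})$ denotes the bilevel design problem with fixed demand $\hat{T} \subseteq T$: minimize $\sum_{h,l} \beta_{hl} z_{hl} + \sum_{r \in \hat{T}} p^r g^r$, where each rider $r \in \hat{T}$ takes a cost-and-convenience-optimal route using opened bus arcs and on-demand shuttle legs; ODMTS-DFD$(\hat{T}, A)$ additionally forces all arcs in $A$ to be opened. The function $eval(\mathbf{z})$ evaluates a design on the full trip set $T$. Algorithm arc-S1 (parametrized by a function Expand): start with $k=0$, $\mathbf{z}_{fixed} = \vec{0}$, $\overline{T}^0 = T \setminus T'$, $B^0 = \infty$. Repeat: solve $\mathbf{z}^k_{temp} = $ ODMTS-DFD$(\overline{T}^k, \{(h,l) : (z_{fixed})_{hl}=1\})$;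 let $Y^k$ be the set of directed cycles in $\mathbf{z}^k_{temp} - \mathbf{z}_{fixed}$; if $Y^k = \emptyset$ stop; otherwise choose $\mathbf{y}^k \in Y^k$ minimizing $eval(\mathbf{z}_{fixed} + \mathbf{y})$ with value $obj^k$; if $obj^k < B^k$ set $B^{k+1} = obj^k$, else stop; set $\mathbf{z}_{fixed} = \mathbf{z}_{fixed} + \mathbf{y}^k$, $\mathbf{z}^k = \mathbf{z}_{fixed}$, $T'^k_{next} = $ Expand$(T', \mathbf{z}^k)$, $\overline{T}^{k+1} = \overline{T}^k \cup T'^k_{next}$, $k=k+1$. Return $\mathbf{z}^k$. The designs $\mathbf{z}^0 \le \mathbf{z}^1 \le \dots$ increase componentwise. Expansion rule (d): Expand$(T', \mathbf{z}^k)$ returns every latent trip $r$ that adopts $\mathbf{z}^k$ and satisfies $UB^r \le \alpha^r t^r_{cur}$, where $UB^r$ is an upper bound (from a result of Basciftci et al. 2021) on the ODMTS travel time of trip $r$ under any design $\mathbf{z}' \ge \mathbf{z}^k$: with $t^1$ the travel time of $r$ under $\mathbf{z}^k$, $d$ distances, $g$ a shuttle time-per-distance factor and $\theta$ the cost/convenience weight, $UB^r = t^1 + \frac{1-\theta}{\theta} g \big(d_{or^r m} + d_{n de^r} - \min_{h,l \in H}\{d_{or^r h} + d_{l de^r}\}\big)$ if $r$ uses a multimodal route with first hub $m$ and last hub $n$, and $UB^r = \max\{t^1, t^1 + \frac{1-\theta}{\theta} g (d_{or^r de^r} - \min_{h,l\in H}\{d_{or^r h} + d_{l de^r}\})\}$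 if $r$ uses a direct shuttle. Consequently, a trip satisfying this condition adopts every design $\mathbf{z}' \ge \mathbf{z}^k$. *)

From mathcomp Require Import all_boot all_order all_algebra.
Set Implicit Arguments. Unset Strict Implicit. Unset Printing Implicit Defensive.
Import Order.TTheory GRing.Theory Num.Theory.
Local Open Scope ring_scope.

Section ODMTS.
Variables (R : realFieldType) (T H : finType) (Pt : Type).

(* A network design: z (h,l) = true iff bus arc h -> l is opened. *)
Definition design := {ffun H * H -> bool}.

Definition design0 : design := [ffun => false].

Definition design_le (z z' : design) : Prop := forall a, z a -> z' a.

Definition balanced (z : design) : Prop :=
  forall h, #|[set l | z (h, l)]| = #|[set l | z (l, h)]|.

(* Data of an instance.
   - latent : the latent trips T'; core trips are ~: latent
   - alpha r, tcur r : adoption factor and current travel time of trip r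
   - time z r : ODMTS travel time of trip r under design z (cost/convenience optimal route)
   - route z r : Some (m,n) if r uses a multimodal route with first hub m and last hub n
                 under z, None if it uses a direct shuttle
   - dist, orig, dest, hubpt : distances between locations, origin/destination of
     trips, and location of hubs
   - gfac : shuttle time-per-distance factor g; theta : cost/convenience weight *)
Record instance := Instance {
  latent : {set T};
  alpha : T -> R;
  tcur : T -> R;
  time : design -> T -> R;
  route : design -> T -> option (H * H);
  dist : Pt -> Pt -> R;
  orig : T -> Pt;
  dest : T -> Pt;
  hubpt : H -> Pt;
  gfac : R;
  theta : R
}.

Variable I : instance.

(* Adoption: a latent trip adopts z iff its ODMTS time is at most alpha * t_cur;
   core trips (existing riders) always use the ODMTS. *)
Definition adopts (z : design) (r : T) : bool :=
  (r \notin latent I) || (time I z r <= alpha I r * tcur I r).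

(* min_{h,l in H} (d_{or h} + d_{l de}); h0 witnesses that H is nonempty *)
Definition minHubDist (h0 : H) (r : T) : R :=
  \big[Num.min/ dist I (orig I r) (hubpt I h0) + dist I (hubpt I h0) (dest I r)]_(p : H * H)
     (dist I (orig I r) (hubpt I p.1) + dist I (hubpt I p.2) (dest I r)).

(* Upper bound UB^r of Basciftci et al. 2021 *)
Definition UB (h0 : H) (z : design) (r : T) : R :=
  let t1 := time I z r in
  let c := (1 - theta I) / theta I * gfac I in
  match route I z r with
  | Some (m, n) =>
      t1 + c * (dist I (orig I r) (hubpt I m) + dist I (hubpt I n) (dest I r)
                - minHubDist h0 r)
  | None =>
      Num.max t1 (t1 + c * (dist I (orig I r) (dest I r) - minHubDist h0 r))
  end.

(* The result of Basciftci et al. 2021 (taken as hypothesis): UB^r bounds the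
   ODMTS travel time of a latent trip r under any design z' >= z. *)
Definition UB_bound (h0 : H) : Prop :=
  forall (z z' : design) (r : T), r \in latent I -> design_le z z' ->
    time I z' r <= UB h0 z r.

Definition expand_d (h0 : H) (z : design) : {set T} :=
  [set r in latent I | adopts z r && (UB h0 z r <= alpha I r * tcur I r)].

(* A run of Algorithm arc-S1 with Expand = rule (d).
   zf k is the fixed design z_fixed at the start of iteration k
   (zf 0 = 0, zf (k+1) = z^k = zf k + y^k), and Tb k is the trip set \bar T^k
   (Tb 0 = T \ T', \bar T^{k+1} = \bar T^k \cup Expand(T', z^k)). *)
Definition arc_S1_run (h0 : H) (zf : nat -> design) (Tb : nat -> {set T}) : Prop :=
  [/\ zf 0 = design0,
      Tb 0 = ~: latent I,
      forall k, design_le (zf k) (zf k.+1)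
    & forall k, Tb k.+1 = Tb k :|: expand_d h0 (zf k.+1)].

End ODMTS.

(* A trip enters the considered set either as a core trip, which adopts every
   design, or through rule (d) at some design z^k.  In the latter case the
   bound UB^r <= alpha^r t^r_cur of Basciftci et al. controls its travel time
   under every design above z^k, and the designs produced later by arc-S1 only
   grow, so the trip keeps adopting them. *)
From mathcomp Require Import all_boot all_order all_algebra.
Set Implicit Arguments. Unset Strict Implicit. Unset Printing Implicit Defensive.
Import Order.TTheory GRing.Theory Num.Theory.
Local Open Scope ring_scope.

Section DesignOrder.
Variable H : finType.

Lemma design_le_refl (z : design H) : design_le z z.
Proof. by []. Qed.

Lemma design_le_trans (z1 z2 z3 : design H) :
  design_le z1 z2 -> design_le z2 z3 -> design_le z1 z3.
Proof. by move=> le12 le23 a /le12 /le23. Qed.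

Lemma design_le_homo (zf : nat -> design H) :
  (forall k, design_le (zf k) (zf k.+1)) ->
  forall i j, (i <= j)%N -> design_le (zf i) (zf j).
Proof.
move=> zf_step i j /subnK <-; elim: (j - i)%N => [|d IHd].
  exact: design_le_refl.
by rewrite addSn; apply: design_le_trans (zf_step _).
Qed.

End DesignOrder.

Section Adoption.
Variables (R : realFieldType) (T H : finType) (Pt : Type).
Variables (I : instance R T H Pt) (h0 : H).

Lemma adopts_core (z : design H) (r : T) : r \notin latent I -> adopts I z r.
Proof. by rewrite /adopts => ->. Qed.

Lemma expand_d_adopts_above (z z' : design H) (r : T) :
  UB_bound I h0 -> r \in expand_d I h0 z -> design_le z z' -> adopts I z' r.
Proof.
move=> UBr; rewrite inE => /andP[r_latent /andP[_ UB_le]] le_zz'.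
by apply/orP; right; apply: le_trans UB_le; apply: UBr.
Qed.

Lemma arc_S1_run_adopts_later (zf : nat -> design H) (Tb : nat -> {set T}) :
  UB_bound I h0 -> arc_S1_run I h0 zf Tb ->
  forall k j, (k <= j)%N -> {in Tb k, forall r, adopts I (zf j) r}.
Proof.
move=> UBr [_ Tb0 zf_step Tb_step]; elim=> [|k IHk] j le_kj r.
  by rewrite Tb0 inE; apply: adopts_core.
rewrite Tb_step inE => /orP[r_Tbk | r_exp].
  exact: IHk j (ltnW le_kj) r r_Tbk.
exact: expand_d_adopts_above UBr r_exp (design_le_homo zf_step le_kj).
Qed.

End Adoption.

Theorem mainTheorem7 (R : realFieldType) (T H : finType) (Pt : Type)
  (I : instance R T H Pt) (h0 : H)
  (zf : nat -> design H) (Tb : nat -> {set T}) :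
  0 < theta I ->
  UB_bound I h0 ->
  arc_S1_run I h0 zf Tb ->
  (forall k, balanced (zf k)) ->
  forall (k : nat) (r : T), r \in Tb k -> adopts I (zf k) r.
Proof.
move=> _ UBr run _ k; apply: (arc_S1_run_adopts_later UBr run (leqnn k)).
Qed.
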